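(* Let $\mathbf{T}\in\mathbb{R}^{d\times T}$ have full column rank $T$, let $1\le M<T$, let $\kappa>0$, and let $\mathbf{G}=\mathbf{T}^\top\mathbf{T}$ have eigenvalues $\lambda_1(\mathbf{G})\ge\dots\ge\lambda_T(\mathbf{G})$ with $\lambda_M(\mathbf{G})>\lambda_{M+1}(\mathbf{G})$. Let $S_\star\subseteq\mathbb{R}^T$ be the span of eigenvectors of $\mathbf{G}$ for the top $M$ eigenvalues. For $\mathbf{A}\in\mathbb{R}^{T\times M}$ let $\mathbf{W}_e(\mathbf{A})\in\mathbb{R}^{T\times M}$ be the matrix whose $m$-th column is $\mathrm{softmax}(\mathbf{A}_{:,m}/\kappa)$. Then there exist $\mathbf{A}\in\mathbb{R}^{T\times M}$ and $\mathbf{W}_d\in\mathbb{R}^{M\times T}$ with $$\|\mathbf{T}\mathbf{W}_e(\mathbf{A})\mathbf{W}_d-\mathbf{T}\|_F^2=\sum_{i=M+1}^{T}\lambda_i(\mathbf{G})$$ (i.e., the softmax-encoder linear autoencoder attains the optimal rank-$M$ reconstruction error) if and only if there exist $M$ linearly independent vectors $x_1,\dots,x_M\in S_\star$ all of whose coordinates are strictly positive.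
   Context: $\mathrm{softmax}(z)_i=e^{z_i}/\sum_j e^{z_j}$. $\|\cdot\|_F$ is the Frobenius norm. For every $\mathbf{W}_e,\mathbf{W}_d$ of these shapes, $\|\mathbf{T}\mathbf{W}_e\mathbf{W}_d-\mathbf{T}\|_F^2\ge\sum_{i=M+1}^T\lambda_i(\mathbf{G})$ (the Eckart–Young bound), so the claim characterizes when this lower bound is achieved with a softmax-activated encoder. *)

From HB Require Import structures.
From mathcomp Require Import all_boot all_order all_algebra.
From mathcomp Require Import all_classical all_reals all_analysis.
Set Implicit Arguments. Unset Strict Implicit. Unset Printing Implicit Defensive.
Import Order.TTheory GRing.Theory Num.Theory.
Local Open Scope ring_scope.

Definition frob2 {R : realType} {m n : nat} (X : 'M[R]_(m, n)) : R :=
  \sum_(i < m) \sum_(j < n) X i j ^+ 2.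

Definition softmax_enc {R : realType} {T M : nat} (kappa : R) (A : 'M[R]_(T, M))
  : 'M[R]_(T, M) :=
  \matrix_(i < T, m < M)
    (expR (A i m / kappa) / \sum_(k < T) expR (A k m / kappa)).

(* S_star: span (row space) of the eigenvectors of G for the top M eigenvalues
   lam 0, ..., lam (M-1) (0-indexed) *)
Definition top_eigenspace {R : realType} {T : nat} (G : 'M[R]_T) (lam : 'I_T -> R)
  (M : nat) : 'M[R]_T :=
  (\sum_(i < T | (i < M)%N) eigenspace G (lam i))%MS.

From HB Require Import structures.
From mathcomp Require Import all_boot all_order all_algebra.
From mathcomp Require Import all_classical all_reals all_analysis.
From mathcomp Require Import zify lra.
Import Order.TTheory GRing.Theory Num.Theory.
Local Open Scope ring_scope.

Set Implicit Arguments. Unset Strict Implicit. Unset Printing Implicit Defensive.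

(* Let [P] be the orthogonal projector onto S_star, [B = We Wd] (rank <= M) and
   [Pi] the projector onto the left kernel of [B], of dimension >= T - M. The
   error splits as [tr (G Pi) + |T (B - 1) (1 - Pi)|^2], and cutting
   [tr (G Pi)] along [P] and [1 - P], with the Rayleigh bounds [>= lambda_M] on
   S_star and [<= lambda_(M+1)] on its complement, gives
   [tr (G Pi) >= sum_(i > M) lambda_i + (lambda_M - lambda_(M+1)) tr (P Pi)].
   Optimality therefore forces [P Pi = 0] and [B = 1 - Pi], so S_star lies in
   the column space of [We], which is then S_star itself; softmax columns are
   positive. Conversely, positive [x_m] normalised to sum one are the softmax
   columns of [A = kappa ln x], and [Wd] can be chosen with [We Wd = P]. *)

Section GramTrace.
Variable R : realFieldType.

Lemma mxtrace_mul_trmx m n (A : 'M[R]_(m, n)) :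
  \tr (A *m A^T) = \sum_(i < m) \sum_(j < n) A i j ^+ 2.
Proof.
apply: eq_bigr => i _; rewrite mxE.
by apply: eq_bigr => j _; rewrite mxE expr2.
Qed.

Lemma mxtrace_mul_trmx_ge0 m n (A : 'M[R]_(m, n)) : 0 <= \tr (A *m A^T).
Proof.
by rewrite mxtrace_mul_trmx; apply: sumr_ge0 => i _; apply: sumr_ge0 => j _;
  apply: sqr_ge0.
Qed.

Lemma mxtrace_mul_trmx_eq0 m n (A : 'M[R]_(m, n)) : \tr (A *m A^T) = 0 -> A = 0.
Proof.
rewrite mxtrace_mul_trmx => /eqP; rewrite psumr_eq0; last first.
  by move=> i _; apply: sumr_ge0 => j _; apply: sqr_ge0.
move=> /allP A0; apply/matrixP => i j; rewrite mxE.
have /A0 : i \in index_enum 'I_m by rewrite mem_index_enum.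
rewrite /= psumr_eq0; last by move=> k _; apply: sqr_ge0.
by move=> /allP /(_ j (mem_index_enum _)) /=; rewrite sqrf_eq0 => /eqP.
Qed.

Lemma mul_trmx_unitmx m n (Z : 'M[R]_(m, n)) : row_free Z -> Z *m Z^T \in unitmx.
Proof.
move=> fZ; rewrite -row_free_unit.
have ker0 : kermx (Z *m Z^T) = 0.
  set K := kermx _; have KZ : K *m (Z *m Z^T) = 0 by apply/sub_kermxP.
  have KZ0 : K *m Z = 0.
    apply: mxtrace_mul_trmx_eq0.
    by rewrite trmx_mul mulmxA -(mulmxA K) KZ mul0mx linear0.
  by apply/eqP; rewrite -(mulmx_free_eq0 _ fZ) KZ0.
have := mxrank_ker (Z *m Z^T); rewrite ker0 mxrank0 => /esym/eqP.
by rewrite subn_eq0 /row_free eqn_leq rank_leq_row.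
Qed.

Lemma eigen_mul_trmx0 n (G : 'M[R]_n) m1 m2 (A : 'M[R]_(m1, n)) (B : 'M[R]_(m2, n))
    a b :
  G^T = G -> A *m G = a *: A -> B *m G = b *: B -> a != b -> A *m B^T = 0.
Proof.
move=> sG AG BG neq_ab.
have : a *: (A *m B^T) = b *: (A *m B^T).
  by rewrite scalemxAl -AG -mulmxA -{1}sG -trmx_mul BG linearZ /= scalemxAr.
move/eqP; rewrite -subr_eq0 -scalerBl scaler_eq0 subr_eq0 (negPf neq_ab) /=.
by move/eqP.
Qed.

Lemma gram_eigenvalue_ge0 m n (Tm : 'M[R]_(m, n)) a :
  eigenvalue (Tm^T *m Tm) a -> 0 <= a.
Proof.
move=> /eigenvalueP [v vG nz_v].
have quad : \tr ((v *m Tm^T) *m (v *m Tm^T)^T) = a * \tr (v *m v^T).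
  by rewrite trmx_mul trmxK !mulmxA -(mulmxA v) vG -scalemxAl mxtraceZ.
have vv_gt0 : 0 < \tr (v *m v^T).
  rewrite lt_def mxtrace_mul_trmx_ge0 andbT; apply/eqP => /mxtrace_mul_trmx_eq0.
  by apply/eqP.
by rewrite -(pmulr_lge0 _ vv_gt0) -quad mxtrace_mul_trmx_ge0.
Qed.

Lemma trmx_compl n (P : 'M[R]_n) : P^T = P -> (1%:M - P)^T = 1%:M - P.
Proof. by move=> sP; rewrite linearB /= trmx1 sP. Qed.

Lemma idem_compl n (P : 'M[R]_n) : P *m P = P -> (1%:M - P) *m (1%:M - P) = 1%:M - P.
Proof. by move=> iP; rewrite mulmxBr mulmx1 mulmxBl mul1mx iP subrr subr0. Qed.

Lemma mul_trmx_split m n (E : 'M[R]_(m, n)) (Pi : 'M[R]_n) :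
  Pi^T = Pi -> Pi *m Pi = Pi ->
  E *m E^T = (E *m Pi) *m (E *m Pi)^T + (E *m (1%:M - Pi)) *m (E *m (1%:M - Pi))^T.
Proof.
move=> sPi iPi; rewrite !trmx_mul trmx_compl // sPi !mulmxA -!(mulmxA E).
by rewrite iPi idem_compl // -mulmxDr -mulmxDl addrC subrK mul1mx.
Qed.

End GramTrace.

Section OrthoProj.
Variable R : realFieldType.

Definition orthoproj m n (Z : 'M[R]_(m, n)) : 'M[R]_n :=
  Z^T *m invmx (Z *m Z^T) *m Z.

Variables (m n : nat) (Z : 'M[R]_(m, n)).

Lemma orthoproj_sym : (orthoproj Z)^T = orthoproj Z.
Proof.
rewrite /orthoproj !trmx_mul trmxK mulmxA; congr (_ *m _ *m _).
by rewrite trmx_inv trmx_mul trmxK.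
Qed.

Hypothesis fZ : row_free Z.

Lemma orthoproj_sub : (orthoproj Z <= Z)%MS.
Proof. exact: submxMl. Qed.

Lemma orthoproj_id p (A : 'M[R]_(p, n)) : (A <= Z)%MS -> A *m orthoproj Z = A.
Proof.
move=> /submxP [D ->]; rewrite /orthoproj !mulmxA -(mulmxA D Z Z^T).
by rewrite mulmxK ?mul_trmx_unitmx.
Qed.

Lemma orthoproj_idem : orthoproj Z *m orthoproj Z = orthoproj Z.
Proof. by rewrite orthoproj_id // orthoproj_sub. Qed.

Lemma orthoproj_ortho p (A : 'M[R]_(p, n)) : A *m Z^T = 0 -> A *m orthoproj Z = 0.
Proof. by move=> AZ; rewrite /orthoproj !mulmxA AZ !mul0mx. Qed.

Lemma mxtrace_orthoproj : \tr (orthoproj Z) = m%:R.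
Proof. by rewrite mxtrace_mulC mulmxA mulmxV ?mul_trmx_unitmx // mxtrace1. Qed.

Lemma eqmx_orthoproj : (orthoproj Z == Z)%MS.
Proof.
by rewrite orthoproj_sub; apply/submxP; exists Z; rewrite orthoproj_id.
Qed.

End OrthoProj.

Lemma orthoproj_eqmx (R : realFieldType) m1 m2 n
    (Z1 : 'M[R]_(m1, n)) (Z2 : 'M[R]_(m2, n)) :
  row_free Z1 -> row_free Z2 -> (Z1 == Z2)%MS -> orthoproj Z1 = orthoproj Z2.
Proof.
move=> f1 f2 /andP [s12 s21].
have e1 : orthoproj Z1 *m orthoproj Z2 = orthoproj Z1.
  by rewrite orthoproj_id // (submx_trans (orthoproj_sub Z1)).
have e2 : orthoproj Z2 *m orthoproj Z1 = orthoproj Z2.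
  by rewrite orthoproj_id // (submx_trans (orthoproj_sub Z2)).
by rewrite -[LHS]orthoproj_sym -e1 trmx_mul !orthoproj_sym e2.
Qed.

Section SymmetricDiagonalization.
Variable R : realFieldType.

Lemma horner_mx_trmx n' (A : 'M[R]_(n'.+1)) p :
  (horner_mx A p)^T = horner_mx A^T p.
Proof.
elim/poly_ind: p => [|p c IH]; first by rewrite !rmorph0 linear0.
rewrite !rmorphD !rmorphM /= !horner_mx_X !horner_mx_C linearD /= tr_scalar_mx.
congr (_ + _); rewrite -!mulmxE trmx_mul IH.
by have := comm_mx_horner p (comm_mx_refl A^T); rewrite /comm_mx => ->.
Qed.

(* [tr (H^k (H^k)^T) = tr H^(2k)] lets us halve the nilpotency index. *)
Lemma sym_nilpotent_eq0 n' (H : 'M[R]_(n'.+1)) k : H^T = H -> H ^+ k = 0 -> H = 0.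
Proof.
move=> sH; have sHk j : (H ^+ j)^T = H ^+ j.
  elim: j => [|j IH]; first by rewrite expr0 trmx1.
  by rewrite exprS -mulmxE trmx_mul IH sH mulmxE -exprSr exprS.
have step j : H ^+ j.+2 = 0 -> H ^+ j.+1 = 0.
  move=> Hj; apply: mxtrace_mul_trmx_eq0; rewrite sHk mulmxE -exprD.
  by rewrite -addSnnS exprD Hj mul0r linear0.
elim: k => [|[|j] IH] Hk; first by move/eqP: Hk; rewrite expr0 oner_eq0.
  by rewrite -(expr1 H).
exact/IH/step.
Qed.

Lemma char_poly_conj n (W A : 'M[R]_n) : W \in unitmx ->
  char_poly (W *m A *m invmx W) = char_poly A.
Proof.
move=> uW; rewrite /char_poly /char_poly_mx !map_mxM.
set Wf := map_mx _ W; set Af := map_mx _ A; set Vf := map_mx _ (invmx W).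
have WV : Wf *m Vf = 1%:M by rewrite /Wf /Vf -map_mxM mulmxV // map_mx1.
have -> : 'X%:M - Wf *m Af *m Vf = Wf *m ('X%:M - Af) *m Vf.
  by rewrite mulmxBr mulmxBl mul_mx_scalar -scalemxAl WV scalemx1.
rewrite !det_mulmx mulrC mulrA -det_mulmx mulmxE.
have -> : Vf * Wf = 1%:M by apply/eqP; rewrite -mulmxE mulmx1C // -WV.
by rewrite det1 mul1r.
Qed.

(* The minimal polynomial of a symmetric [G] has simple roots: with [p] the
   product of [X - a] over the distinct eigenvalues, [p(G)] is symmetric and
   nilpotent since [char_poly G] divides [p ^ n]. *)
Lemma symmetric_diagonalizable n' (G : 'M[R]_(n'.+1)) (lam : 'I_(n'.+1) -> R) :
  G^T = G -> char_poly G = \prod_(i < n'.+1) ('X - (lam i)%:P) ->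
  exists W (d : 'rV[R]_(n'.+1)), [/\ W \in unitmx, W *m G = diag_mx d *m W &
    perm_eq [seq d 0 k | k <- index_enum 'I_(n'.+1)]
            [seq lam i | i <- index_enum 'I_(n'.+1)]].
Proof.
move=> sG cG; set ls := [seq lam i | i <- _].
set p := \prod_(x <- undup ls) ('X - x%:P).
have dvd_cp : char_poly G %| \prod_(i < n'.+1) p.
  rewrite cG; apply: (big_ind2 (fun a b => a %| b)) => //.
    by move=> x1 x2 y1 y2; apply: dvdp_mul.
  move=> i _; rewrite dvdp_XsubCl root_prod_XsubC mem_undup.
  by apply: map_f; rewrite mem_index_enum.
have pG0 : horner_mx G p = 0.
  apply: (@sym_nilpotent_eq0 _ _ n'.+1); first by rewrite horner_mx_trmx sG.
  have : horner_mx G (\prod_(i < n'.+1) p) = 0.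
    by move: dvd_cp; rewrite dvdp_eq => /eqP ->; rewrite rmorphM /= Cayley_Hamilton mulr0.
  by rewrite rmorph_prod /= prodr_const card_ord.
have [W uW /similar_diagPex [d /(similarP uW) WG]] :
    exists2 W, (W : 'M[R]_(n'.+1)) \in unitmx & similar_diag W G.
  apply/diagonalizableP; exists (undup ls); first exact: undup_uniq.
  exact: mxminpoly_min.
exists W, d; split => //; apply: prod_XsubC_eq; rewrite !big_map -cG.
rewrite -(char_poly_conj G uW) WG mulmxK //.
rewrite (char_poly_trig (is_diag_mx_is_trig (diag_mx_is_diag d))).
by apply: eq_bigr => k _; rewrite mxE eqxx mulr1n.
Qed.

End SymmetricDiagonalization.

Section EigenParts.
Variable R : realFieldType.
Variables (n : nat) (G W : 'M[R]_n) (d : 'rV[R]_n).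
Hypotheses (sG : G^T = G) (uW : W \in unitmx) (WG : W *m G = diag_mx d *m W).

Definition diag_spectrum : seq R := undup [seq d 0 k | k <- index_enum 'I_n].

(* The component of the rows of [Y] in the eigenspace of [G] for [a]: the
   rows of [W] are eigenvectors, and we keep the coordinates on those rows
   of [W] whose eigenvalue is [a]. *)
Definition eigenpart p (Y : 'M[R]_(p, n)) a : 'M[R]_(p, n) :=
  Y *m invmx W *m diag_mx (\row_k ((d 0 k == a)%:R : R)) *m W.

Variable p : nat.
Implicit Types Y : 'M[R]_(p, n).

Lemma eigenpart_eigen Y a : eigenpart Y a *m G = a *: eigenpart Y a.
Proof.
rewrite /eigenpart -mulmxA WG !mulmxA -(mulmxA (Y *m invmx W)) mulmx_diag.
rewrite scalemxAl scalemxAr; congr (_ *m _ *m _); apply/matrixP => i j.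
rewrite !mxE; case: (i == j); rewrite ?mulr0n ?mulr0 // !mulr1n.
by case: eqP => [->|_]; rewrite ?mul1r ?mulr1 ?mul0r ?mulr0.
Qed.

Lemma eigenpart_sum Y : \sum_(a <- diag_spectrum) eigenpart Y a = Y.
Proof.
rewrite /eigenpart -mulmx_suml -mulmx_sumr.
have -> : \sum_(a <- diag_spectrum) diag_mx (\row_k ((d 0 k == a)%:R : R)) = 1%:M.
  apply/matrixP => i j; rewrite summxE !mxE.
  under eq_bigr do rewrite !mxE.
  case: (i == j); last by rewrite big1.
  rewrite (bigD1_seq (d 0 i)) ?undup_uniq ?mem_undup ?map_f ?mem_index_enum //=.
  by rewrite eqxx big1 ?addr0 // => a /negPf; rewrite eq_sym => ->.
by rewrite mulmx1 mulmxKV.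
Qed.

Lemma eigenpart_ortho Y Y' a b : a != b -> eigenpart Y a *m (eigenpart Y' b)^T = 0.
Proof. exact/eigen_mul_trmx0/eigenpart_eigen/eigenpart_eigen. Qed.

Lemma eigenpart_mul_trmx Y a : a \in diag_spectrum ->
  eigenpart Y a *m Y^T = eigenpart Y a *m (eigenpart Y a)^T.
Proof.
move=> a_spec; rewrite -[X in _ *m X^T = _](eigenpart_sum Y) linear_sum mulmx_sumr.
rewrite (bigD1_seq a) ?undup_uniq //= big1_seq ?addr0 //.
by move=> b /andP [ba _]; rewrite eigenpart_ortho // eq_sym.
Qed.

Lemma mxtrace_quad_eigenpart Y t :
  \tr (Y *m (G - t%:M) *m Y^T)
  = \sum_(a <- diag_spectrum) (a - t) * \tr (eigenpart Y a *m (eigenpart Y a)^T).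
Proof.
rewrite -{1}(eigenpart_sum Y) !mulmx_suml linear_sum /= !big_seq.
apply: eq_bigr => a a_spec; rewrite mulmxBr eigenpart_eigen mul_mx_scalar.
by rewrite -scalerBl -scalemxAl mxtraceZ eigenpart_mul_trmx.
Qed.

End EigenParts.

Section TopEigenspace.
Variable R : realType.
Variables (n' M : nat) (G : 'M[R]_(n'.+1)) (lam : 'I_(n'.+1) -> R) (c c' : R).
Local Notation n := n'.+1.
Hypotheses (sG : G^T = G) (cpG : char_poly G = \prod_(i < n) ('X - (lam i)%:P))
  (lam_top : forall i : 'I_n, (i < M)%N -> c <= lam i)
  (lam_bot : forall i : 'I_n, (M <= i)%N -> lam i <= c')
  (gap : c' < c) (leMn : (M <= n)%N).

Let S := top_eigenspace G lam M.
Let P := orthoproj (row_base S).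
Let spectrum := [seq lam i | i <- index_enum 'I_n].

Let P_sym : P^T = P.
Proof. exact: orthoproj_sym. Qed.

Lemma top_eigen_orthoproj p (U : 'M[R]_(p, n)) a :
  U *m G = a *: U -> a \in spectrum -> U *m P = (c <= a)%R%:R *: U.
Proof.
move=> UG /mapP [i _ ai]; rewrite {}ai in UG *; have [ci|ic] := leP c (lam i).
  rewrite scale1r orthoproj_id ?row_base_free // eq_row_base.
  apply: (sumsmx_sup i); last exact/eigenspaceP.
  by rewrite ltnNge; apply: contraTN ci => /lam_bot le_ic'; rewrite -ltNge (le_lt_trans le_ic').
rewrite scale0r orthoproj_ortho ?row_base_free //.
have /sub_sumsmxP [u ->] : (row_base S <= S)%MS by rewrite eq_row_base.
rewrite linear_sum mulmx_sumr big1 // => j jM.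
apply: (eigen_mul_trmx0 sG UG); first by apply/eigenspaceP; exact: submxMl.
by apply: contraTneq (lam_top jM) => <-; rewrite -ltNge.
Qed.

Lemma spectrum_below_top a : a \in spectrum -> a < c -> a <= c'.
Proof.
move=> /mapP [i _ ->]; have [iM|/lam_bot //] := ltnP i M.
by rewrite ltNge lam_top.
Qed.

Section Diagonalized.
Variables (W : 'M[R]_n) (d : 'rV[R]_n).
Hypotheses (uW : W \in unitmx) (WG : W *m G = diag_mx d *m W)
  (pd : perm_eq [seq d 0 k | k <- index_enum 'I_n] spectrum).

Let top := \row_k ((c <= d 0 k)%R%:R : R).

Lemma diag_in_spectrum k : d 0 k \in spectrum.
Proof. by rewrite -(perm_mem pd) map_f ?mem_index_enum. Qed.

Lemma sum_diag_spectrum (F : R -> R) : \sum_(k < n) F (d 0 k) = \sum_(i < n) F (lam i).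
Proof.
by have := perm_big (op := +%R) (x := 0) (F := F) (P := xpredT) _ pd; rewrite !big_map.
Qed.

Lemma diag_orthoproj_top : W *m P = diag_mx top *m W.
Proof.
apply/row_matrixP => k; rewrite !row_mul row_diag_mx mxE -scalemxAl -rowE.
apply: top_eigen_orthoproj (diag_in_spectrum k).
by rewrite -row_mul WG row_mul row_diag_mx -scalemxAl -rowE.
Qed.

Lemma orthoproj_topE : P = invmx W *m diag_mx top *m W.
Proof. by rewrite -mulmxA -diag_orthoproj_top mulKmx. Qed.

Lemma orthoproj_top_comm : P *m G = G *m P.
Proof.
have WPG : W *m (P *m G) = diag_mx top *m diag_mx d *m W.
  by rewrite mulmxA diag_orthoproj_top -mulmxA WG mulmxA.
have WGP : W *m (G *m P) = diag_mx d *m diag_mx top *m W.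
  by rewrite mulmxA WG -mulmxA diag_orthoproj_top mulmxA.
apply: (can_inj (mulKmx uW)); rewrite WPG WGP !mulmx_diag.
by congr (diag_mx _ *m _); apply/rowP => k; rewrite !mxE mulrC.
Qed.

Lemma mxtrace_orthoproj_top : \tr P = M%:R.
Proof.
rewrite orthoproj_topE -mulmxA mxtrace_mulC mulmxK // mxtrace_diag.
under eq_bigr do rewrite mxE.
rewrite (sum_diag_spectrum (fun x => (c <= x)%R%:R)).
rewrite (eq_bigr (fun i : 'I_n => if (i < M)%N then 1 else 0)) => [|i _].
  by rewrite -big_mkcond /= (big_ord_narrow leMn) sumr_const card_ord.
have [iM|iM] := ltnP i M; first by rewrite lam_top.
by rewrite leNgt (le_lt_trans (lam_bot iM) gap).
Qed.

Lemma mxtrace_gram_bottom : \tr (G *m (1%:M - P)) = \sum_(i < n | (M <= i)%N) lam i.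
Proof.
have GE : G = invmx W *m diag_mx d *m W by rewrite -mulmxA -WG mulKmx.
have conjE A : \tr (invmx W *m A *m W) = \tr A by rewrite -mulmxA mxtrace_mulC mulmxK.
have GPE : G *m P = invmx W *m (diag_mx d *m diag_mx top) *m W.
  by rewrite orthoproj_topE GE -!mulmxA mulKVmx.
rewrite mulmxBr mulmx1 linearB /= GPE {1}GE !conjE mulmx_diag !mxtrace_diag -sumrB.
rewrite (eq_bigr (fun k => d 0 k - d 0 k * (c <= d 0 k)%R%:R)) => [|k _]; last first.
  by rewrite !mxE.
rewrite (sum_diag_spectrum (fun x => x - x * (c <= x)%R%:R)) [RHS]big_mkcond /=.
apply: eq_bigr => i _; have [iM|iM] := ltnP i M.
  by rewrite lam_top // mulr1 subrr.
by rewrite leNgt (le_lt_trans (lam_bot iM) gap) mulr0 subr0.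
Qed.

Let spec_sub a : a \in diag_spectrum d -> a \in spectrum.
Proof. by rewrite mem_undup => /mapP [k _ ->]; apply: diag_in_spectrum. Qed.

Lemma eigenpart_orthoproj_top p (Y : 'M[R]_(p, n)) a : a \in diag_spectrum d ->
  eigenpart W d Y a *m P = (c <= a)%R%:R *: eigenpart W d Y a.
Proof. by move=> /spec_sub; apply: top_eigen_orthoproj; apply: eigenpart_eigen. Qed.

Lemma rayleigh_top p (Y : 'M[R]_(p, n)) :
  Y *m P = Y -> 0 <= \tr (Y *m (G - c%:M) *m Y^T).
Proof.
move=> YP; rewrite (mxtrace_quad_eigenpart sG uW WG) big_seq.
apply: sumr_ge0 => a a_spec; have [ca|ac] := leP c a.
  by rewrite mulr_ge0 ?subr_ge0 ?mxtrace_mul_trmx_ge0.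
have UP : eigenpart W d Y a *m P = 0.
  by rewrite eigenpart_orthoproj_top // leNgt ac scale0r.
rewrite -(eigenpart_mul_trmx sG uW WG) // -[X in _ *m X^T]YP trmx_mul P_sym.
by rewrite mulmxA UP mul0mx linear0 mulr0.
Qed.

Lemma rayleigh_bottom p (Y : 'M[R]_(p, n)) :
  Y *m P = 0 -> \tr (Y *m (G - c'%:M) *m Y^T) <= 0.
Proof.
move=> YP; rewrite (mxtrace_quad_eigenpart sG uW WG) big_seq.
apply: sumr_le0 => a a_spec; have [ca|ac] := leP c a.
  have UP : eigenpart W d Y a *m P = eigenpart W d Y a.
    by rewrite eigenpart_orthoproj_top // ca scale1r.
  rewrite -(eigenpart_mul_trmx sG uW WG) // -UP -mulmxA -P_sym -trmx_mul YP.
  by rewrite trmx0 mulmx0 linear0 mulr0.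
rewrite mulr_le0_ge0 ?mxtrace_mul_trmx_ge0 // subr_le0.
exact: spectrum_below_top (spec_sub a_spec) ac.
Qed.

End Diagonalized.

Lemma orthoproj_top_eigenspace :
  [/\ P *m G = G *m P, \tr P = M%:R,
      \tr (G *m (1%:M - P)) = \sum_(i < n | (M <= i)%N) lam i,
      forall p (Y : 'M[R]_(p, n)), Y *m P = Y -> 0 <= \tr (Y *m (G - c%:M) *m Y^T) &
      forall p (Y : 'M[R]_(p, n)), Y *m P = 0 -> \tr (Y *m (G - c'%:M) *m Y^T) <= 0].
Proof.
have [W [d [uW WG pd]]] := symmetric_diagonalizable sG cpG.
by split; [exact: orthoproj_top_comm uW WG pd | exact: mxtrace_orthoproj_top uW WG pd
  | exact: mxtrace_gram_bottom uW WG pd | exact: rayleigh_top uW WG pd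
  | exact: rayleigh_bottom uW WG pd].
Qed.

End TopEigenspace.

Section KernelProjector.
Variable R : realFieldType.
Variables (p n : nat) (B : 'M[R]_(p, n)).

Lemma mulmx_orthoproj_ker : B *m orthoproj (row_base (kermx B^T)) = 0.
Proof.
set Z := row_base _; have ZB : Z *m B^T = 0 by apply/sub_kermxP; rewrite eq_row_base.
have BZ : B *m Z^T = 0 by apply: trmx_inj; rewrite trmx_mul trmxK ZB trmx0.
by rewrite /orthoproj !mulmxA BZ !mul0mx.
Qed.

Lemma mxtrace_orthoproj_ker :
  \tr (orthoproj (row_base (kermx B^T))) = (n - \rank B)%:R.
Proof. by rewrite mxtrace_orthoproj ?row_base_free // mxrank_ker mxrank_tr. Qed.

End KernelProjector.

Section ReconstructionError.
Variable R : realFieldType.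
Variables (dd n : nat) (Tm : 'M[R]_(dd, n)).

Lemma mxtrace_error_split (B Pi : 'M[R]_n) : Pi^T = Pi -> Pi *m Pi = Pi -> B *m Pi = 0 ->
  \tr ((Tm *m B - Tm) *m (Tm *m B - Tm)^T)
  = \tr (Tm^T *m Tm *m Pi)
    + \tr ((Tm *m B - Tm) *m (1%:M - Pi) *m ((Tm *m B - Tm) *m (1%:M - Pi))^T).
Proof.
move=> sPi iPi BPi; rewrite (mul_trmx_split _ sPi iPi) linearD /=; congr (_ + _).
have -> : (Tm *m B - Tm) *m Pi = - (Tm *m Pi) by rewrite mulmxBl -mulmxA BPi mulmx0 sub0r.
rewrite linearN /= mulNmx mulmxN opprK trmx_mul sPi mulmxA -(mulmxA Tm) iPi.
by rewrite mxtrace_mulC mulmxA.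
Qed.

Lemma mxtrace_error_proj (P : 'M[R]_n) : P^T = P -> P *m P = P ->
  \tr ((Tm *m P - Tm) *m (Tm *m P - Tm)^T) = \tr (Tm^T *m Tm *m (1%:M - P)).
Proof.
move=> sP iP; have -> : Tm *m P - Tm = - (Tm *m (1%:M - P)).
  by rewrite mulmxBr mulmx1 opprB.
rewrite linearN /= mulNmx mulmxN opprK trmx_mul trmx_compl // mulmxA -(mulmxA Tm).
by rewrite idem_compl // mxtrace_mulC mulmxA.
Qed.

End ReconstructionError.

Section KyFan.
Variable R : realFieldType.
Variables (n M : nat) (G P : 'M[R]_n) (c c' : R).
Hypotheses (sP : P^T = P) (iP : P *m P = P) (PG : P *m G = G *m P) (trP : \tr P = M%:R)
  (quad_top_ge0 : forall p (Y : 'M[R]_(p, n)),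
     Y *m P = Y -> 0 <= \tr (Y *m (G - c%:M) *m Y^T))
  (quad_bottom_le0 : forall p (Y : 'M[R]_(p, n)),
     Y *m P = 0 -> \tr (Y *m (G - c'%:M) *m Y^T) <= 0).

Let mxtrace_quad_proj (X Pi : 'M[R]_n) t : X^T = X -> X *m X = X -> X *m G = G *m X ->
    Pi^T = Pi -> Pi *m Pi = Pi ->
  \tr (Pi *m X *m (G - t%:M) *m (Pi *m X)^T) = \tr (G *m X *m Pi) - t * \tr (X *m Pi).
Proof.
move=> sX iX XG sPi iPi.
have XGX : X *m (G - t%:M) *m X = G *m X - t *: X.
  by rewrite mulmxBr mulmxBl XG -(mulmxA G X X) iX mul_mx_scalar -scalemxAl iX.
have -> : Pi *m X *m (G - t%:M) *m (Pi *m X)^T = Pi *m (X *m (G - t%:M) *m X) *m Pi.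
  by rewrite trmx_mul sX sPi !mulmxA.
rewrite XGX mxtrace_mulC mulmxA iPi [LHS]mxtrace_mulC mulmxBl linearB /=.
by rewrite -scalemxAl mxtraceZ.
Qed.

Lemma mxtrace_gram_proj_ge (Pi : 'M[R]_n) : Pi^T = Pi -> Pi *m Pi = Pi ->
  \tr (G *m (1%:M - P)) + (c - c') * \tr (P *m Pi) + c' * (\tr Pi + M%:R - n%:R)
  <= \tr (G *m Pi).
Proof.
move=> sPi iPi; set Q := 1%:M - P.
have QG : Q *m G = G *m Q by rewrite mulmxBl mulmxBr mul1mx mulmx1 PG.
have PiPP : Pi *m P *m P = Pi *m P by rewrite -mulmxA iP.
have QP : Q *m P = 0 by rewrite mulmxBl mul1mx iP subrr.
have top := @quad_top_ge0 _ _ PiPP.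
have QPiP : (1%:M - Pi) *m Q *m P = 0 by rewrite -mulmxA QP mulmx0.
have bot := @quad_bottom_le0 _ _ QPiP.
rewrite mxtrace_quad_proj // in top.
rewrite mxtrace_quad_proj ?trmx_compl ?idem_compl // in bot.
have compl A : \tr (A *m (1%:M - Pi)) = \tr A - \tr (A *m Pi).
  by rewrite mulmxBr mulmx1 linearB.
have trQ : \tr Q = n%:R - M%:R by rewrite linearB /= mxtrace1 trP.
have trQPi : \tr (Q *m Pi) = \tr Pi - \tr (P *m Pi) by rewrite mulmxBl mul1mx linearB.
have trGPi : \tr (G *m Pi) = \tr (G *m P *m Pi) + \tr (G *m Q *m Pi).
  by rewrite -linearD /= -mulmxDl -mulmxDr addrC subrK mulmx1.
rewrite !compl trQ trQPi in bot.
rewrite trGPi; lra.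
Qed.

End KyFan.

Section EckartYoungEquality.
Variable R : realFieldType.
Variables (dd n M : nat) (Tm : 'M[R]_(dd, n)) (P : 'M[R]_n) (c c' : R).
Local Notation G := (Tm^T *m Tm).
Hypotheses (fT : row_full Tm) (sP : P^T = P) (iP : P *m P = P)
  (gap : c' < c) (c'_ge0 : 0 <= c')
  (gram_proj_ge : forall Pi : 'M[R]_n, Pi^T = Pi -> Pi *m Pi = Pi ->
     \tr (G *m (1%:M - P)) + (c - c') * \tr (P *m Pi) + c' * (\tr Pi + M%:R - n%:R)
     <= \tr (G *m Pi)).

Lemma optimal_encoder_span (We : 'M[R]_(n, M)) (Wd : 'M[R]_(M, n)) :
  \tr ((Tm *m We *m Wd - Tm) *m (Tm *m We *m Wd - Tm)^T) = \tr (G *m (1%:M - P)) ->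
  (P <= We^T)%MS.
Proof.
rewrite -mulmxA; set B := We *m Wd => opt.
have fZ := row_base_free (kermx B^T); pose Pi := orthoproj (row_base (kermx B^T)).
have sPi : Pi^T = Pi := orthoproj_sym _.
have iPi : Pi *m Pi = Pi := orthoproj_idem fZ.
have BPi : B *m Pi = 0 := mulmx_orthoproj_ker B.
have rkB : (\rank B)%:R <= M%:R :> R.
  by rewrite ler_nat (leq_trans (mxrankM_maxl _ _)) ?rank_leq_col.
have trPi : \tr Pi = n%:R - (\rank B)%:R.
  by rewrite mxtrace_orthoproj_ker natrB ?rank_leq_row.
clearbody Pi.
have PPi : \tr ((Pi *m P) *m (Pi *m P)^T) = \tr (P *m Pi).
  rewrite trmx_mul sP sPi !mulmxA -(mulmxA Pi P P) iP.
  by rewrite mxtrace_mulC mulmxA iPi mxtrace_mulC.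
have bound := gram_proj_ge sPi iPi.
rewrite -opt (mxtrace_error_split Tm sPi iPi BPi) in bound.
have gap_PPi : 0 <= (c - c') * \tr (P *m Pi).
  by rewrite mulr_ge0 -?PPi ?mxtrace_mul_trmx_ge0 // subr_ge0 ltW.
have slack : 0 <= c' * (\tr Pi + M%:R - n%:R) by rewrite mulr_ge0 // trPi; lra.
have X_ge0 := mxtrace_mul_trmx_ge0 ((Tm *m B - Tm) *m (1%:M - Pi)).
have X0 : (Tm *m B - Tm) *m (1%:M - Pi) = 0 by apply: mxtrace_mul_trmx_eq0; lra.
have PiP : Pi *m P = 0.
  apply: mxtrace_mul_trmx_eq0; rewrite PPi; apply/eqP.
  have : (c - c') * \tr (P *m Pi) == 0 by apply/eqP; lra.
  by rewrite mulf_eq0 subr_eq0 gt_eqF.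
have /row_fullP [Tinv TinvT] := fT.
have B1 : (B - 1%:M) *m (1%:M - Pi) = 0.
  rewrite -[X in _ - X](mulmx1 Tm) -mulmxBr -mulmxA in X0.
  by move: (congr1 (mulmx Tinv) X0); rewrite (mulmxA Tinv) TinvT mul1mx mulmx0.
have BQ : B *m (1%:M - Pi) = 1%:M - Pi.
  by apply/eqP; rewrite -subr_eq0 -{2}[1%:M - Pi]mul1mx -mulmxBl B1.
have QP : (1%:M - Pi) *m P = P by rewrite mulmxBl mul1mx PiP subr0.
have BP : B *m P = P by rewrite -{1}QP mulmxA BQ QP.
by rewrite -sP -BP /B !trmx_mul mulmxA submxMl.
Qed.

End EckartYoungEquality.

Section SoftmaxAutoencoder.
Variable R : realType.
Variables (dd n' M : nat) (Tm : 'M[R]_(dd, n'.+1)) (lam : 'I_(n'.+1) -> R).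
Local Notation n := n'.+1.
Local Notation G := (Tm^T *m Tm).
Hypotheses (rkT : \rank Tm = n) (ltMn : (M < n)%N)
  (cpG : char_poly G = \prod_(i < n) ('X - (lam i)%:P))
  (lam_noninc : forall i j : 'I_n, (i <= j)%N -> lam j <= lam i)
  (lam_gap : forall i j : 'I_n, (i : nat) = M.-1 -> (j : nat) = M -> lam j < lam i).

Let c := lam (Ordinal (leq_ltn_trans (leq_pred M) ltMn)).
Let c' := lam (Ordinal ltMn).
Let S := top_eigenspace G lam M.
Let P := orthoproj (row_base S).

Let lam_top (i : 'I_n) : (i < M)%N -> c <= lam i.
Proof. by move=> iM; apply: lam_noninc => /=; lia. Qed.

Let lam_bot (i : 'I_n) : (M <= i)%N -> lam i <= c'.
Proof. exact: (@lam_noninc (Ordinal ltMn)). Qed.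

Let gap : c' < c. Proof. exact: lam_gap. Qed.

Let sG : G^T = G. Proof. by rewrite trmx_mul trmxK. Qed.

Let c'_ge0 : 0 <= c'.
Proof.
apply: (gram_eigenvalue_ge0 (Tm := Tm)); rewrite eigenvalue_root_char cpG.
apply/rootP; rewrite horner_prod; apply/eqP/prodf_eq0.
by exists (Ordinal ltMn) => //; rewrite hornerXsubC subrr.
Qed.

Let top_spec := orthoproj_top_eigenspace sG cpG lam_top lam_bot gap (ltnW ltMn).

Let fY : row_free (row_base S). Proof. exact: row_base_free. Qed.

Let rank_top : \rank S = M.
Proof.
have [_ trP _ _ _] := top_spec.
by apply/eqP; rewrite -(eqr_nat R) -trP mxtrace_orthoproj.
Qed.

Lemma optimal_encoder_top (We : 'M[R]_(n, M)) (Wd : 'M[R]_(M, n)) :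
  \tr ((Tm *m We *m Wd - Tm) *m (Tm *m We *m Wd - Tm)^T)
    = \sum_(i < n | (M <= i)%N) lam i ->
  row_free We^T /\ (We^T <= S)%MS.
Proof.
move=> opt; have [PG trP trGQ top bot] := top_spec.
have [sP iP] := (orthoproj_sym (row_base S), orthoproj_idem fY).
have fT : row_full Tm by rewrite /row_full rkT.
rewrite -trGQ in opt.
have PW := optimal_encoder_span fT sP iP gap c'_ge0
  (mxtrace_gram_proj_ge sP iP PG trP top bot) opt.
have rkP : \rank P = M by rewrite (eqmx_rank (eqmx_orthoproj fY)) eq_row_base.
have rkW : \rank We^T = M by apply/eqP; rewrite eqn_leq rank_leq_row -{1}rkP mxrankS.
split; first by rewrite /row_free rkW.
have [_ eq_rk] := mxrank_leqif_sup PW.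
have WP : (We^T <= P)%MS by rewrite -eq_rk rkP rkW.
by rewrite (submx_trans WP) // (submx_trans (orthoproj_sub _)) // eq_row_base.
Qed.

Lemma orthoproj_encoder_error (Z : 'M[R]_(M, n)) : row_free Z -> (Z <= S)%MS ->
  \tr ((Tm *m Z^T *m (invmx (Z *m Z^T) *m Z) - Tm)
       *m (Tm *m Z^T *m (invmx (Z *m Z^T) *m Z) - Tm)^T)
    = \sum_(i < n | (M <= i)%N) lam i.
Proof.
move=> fZ sZ; have [_ _ trGQ _ _] := top_spec.
have eqZS : (Z == row_base S)%MS.
  have sZY : (Z <= row_base S)%MS by rewrite eq_row_base.
  by have [_ <-] := mxrank_leqif_eq sZY; rewrite eq_row_base rank_top.
have -> : Tm *m Z^T *m (invmx (Z *m Z^T) *m Z) = Tm *m P.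
  by rewrite /P -(orthoproj_eqmx fZ fY eqZS) /orthoproj !mulmxA.
by rewrite mxtrace_error_proj ?orthoproj_sym ?orthoproj_idem.
Qed.

End SoftmaxAutoencoder.

Lemma frob2E (R : realType) m n (X : 'M[R]_(m, n)) : frob2 X = \tr (X *m X^T).
Proof. by rewrite mxtrace_mul_trmx. Qed.

Lemma sumr_gt0 (R : numDomainType) (I : finType) (i0 : I) (F : I -> R) :
  (forall i, 0 < F i) -> 0 < \sum_i F i.
Proof.
move=> F_gt0; rewrite (bigD1 i0) //= ltr_wpDr ?F_gt0 //.
by apply: sumr_ge0 => i _; apply/ltW/F_gt0.
Qed.

Lemma softmax_enc_gt0 (R : realType) T M (kappa : R) (A : 'M[R]_(T, M)) i m :
  0 < softmax_enc kappa A i m.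
Proof.
by rewrite mxE divr_gt0 ?expR_gt0 // (sumr_gt0 i) // => k; apply: expR_gt0.
Qed.

Lemma softmax_enc_ln (R : realType) T M (kappa : R) (X : 'M[R]_(M, T)) :
  0 < kappa -> (forall m j, 0 < X m j) ->
  softmax_enc kappa (\matrix_(j, m) (kappa * ln (X m j)))
  = (diag_mx (\row_m (\sum_j X m j)^-1) *m X)^T.
Proof.
move=> kappa_gt0 X_gt0.
have expK m j : expR (kappa * ln (X m j) / kappa) = X m j.
  by rewrite mulrC mulKf ?gt_eqF // lnK // posrE.
apply/matrixP => j m; rewrite mul_diag_mx !mxE expK mulrC.
by under eq_bigr do rewrite mxE expK.
Qed.

Lemma eqmx_diag_mul (F : fieldType) m n (r : 'rV[F]_m) (X : 'M[F]_(m, n)) :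
  (forall i, r 0 i != 0) -> (diag_mx r *m X :=: X)%MS.
Proof.
move=> r_neq0; apply: eqmxMfull; rewrite row_full_unit unitmxE det_diag unitfE.
by apply/prodf_neq0 => i _.
Qed.

Theorem mainTheorem3 (R : realType) (d Tn M : nat) (Tm : 'M[R]_(d, Tn))
  (kappa : R) (lam : 'I_Tn -> R) :
  \rank Tm = Tn ->
  (1 <= M)%N -> (M < Tn)%N ->
  0 < kappa ->
  (* lam lists the eigenvalues of G = Tm^T Tm with multiplicity, nonincreasing *)
  char_poly (Tm^T *m Tm) = \prod_(i < Tn) ('X - (lam i)%:P) ->
  (forall i j : 'I_Tn, (i <= j)%N -> lam j <= lam i) ->
  (* spectral gap lambda_M > lambda_{M+1} (1-indexed) *)
  (forall i j : 'I_Tn, (i : nat) = M.-1 -> (j : nat) = M -> lam j < lam i) ->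
  (exists (A : 'M[R]_(Tn, M)) (Wd : 'M[R]_(M, Tn)),
      frob2 (Tm *m softmax_enc kappa A *m Wd - Tm)
      = \sum_(i < Tn | (M <= i)%N) lam i)
  <->
  (exists X : 'M[R]_(M, Tn),
      row_free X /\
      (X <= top_eigenspace (Tm^T *m Tm) lam M)%MS /\
      (forall (m : 'I_M) (j : 'I_Tn), 0 < X m j)).
Proof.
move=> rkT _ ltMn kappa_gt0 cpG lam_noninc lam_gap.
case: Tn Tm lam rkT ltMn cpG lam_noninc lam_gap => // n' Tm lam.
move=> rkT ltMn cpG lam_noninc lam_gap.
have [optimal_top error_top] :=
  (optimal_encoder_top rkT ltMn cpG lam_noninc lam_gap,
   orthoproj_encoder_error rkT ltMn cpG lam_noninc lam_gap).
split=> [[A [Wd opt]] | [X [fX [sX X_gt0]]]].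
  rewrite frob2E in opt; have [fW sW] := optimal_top _ _ opt.
  by exists (softmax_enc kappa A)^T; split; [|split] => // m j; rewrite mxE softmax_enc_gt0.
pose r := \row_m (\sum_j X m j)^-1.
have r_neq0 m : r 0 m != 0 by rewrite mxE invr_eq0 gt_eqF // (sumr_gt0 ord0).
have eqZX := eqmx_diag_mul X r_neq0; set Z := diag_mx r *m X in eqZX.
exists (\matrix_(j, m) (kappa * ln (X m j))), (invmx (Z *m Z^T) *m Z).
rewrite frob2E softmax_enc_ln //; apply: error_top; first by rewrite /row_free eqZX.
by rewrite eqZX.
Qed.
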